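(* Let $\ell\ge 4$, $s\ge0$, $r\ge 2$ be integers and $k=\lfloor(\ell-2)/2\rfloor$. For every $\gamma>0$ there is $n_0$ such that for every $n\ge n_0$ the following holds: if $G$ is an $n$-vertex $B(\ell,s)$-free graph that maximizes $e_r(G)$ among all $n$-vertex $B(\ell,s)$-free graphs, or that maximizes $\mathcal N(S_r,G)$ among all $n$-vertex $B(\ell,s)$-free graphs, then there is a set $B\subseteq V(G)$ with $|B|=k$ such that at least $(1-\gamma)\binom{n}{r}$ of the $r$-element subsets of $V(G)$ have common neighborhood exactly $B$.
   Context: For a graph $G$ with degrees $d_1,\dots,d_n$, $e_r(G)=\sum_i d_i^r$ and $\mathcal N(S_r,G)=\sum_i\binom{d_i}{r}$ is the number of copies of the star $S_r$ with $r$ leaves. The broom $B(\ell,s)$ is the graph obtained from a path on $\ell$ vertices by adding $s$ new vertices, each joined only to a penultimate vertex of the path (a neighbor of an endpoint). The common neighborhood of a vertex set $X$ is the set of vertices adjacent to every vertex of $X$. *)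

From mathcomp Require Import all_boot all_order all_algebra.
From mathcomp Require Import reals.
Set Implicit Arguments. Unset Strict Implicit. Unset Printing Implicit Defensive.

Definition simple_graph (n : nat) (G : rel 'I_n) : Prop :=
  symmetric G /\ irreflexive G.

Definition deg (n : nat) (G : rel 'I_n) (v : 'I_n) : nat := #|[set u | G v u]|.

Definition e_r (r n : nat) (G : rel 'I_n) : nat := \sum_(v : 'I_n) deg G v ^ r.

Definition N_star (r n : nat) (G : rel 'I_n) : nat := \sum_(v : 'I_n) 'C(deg G v, r).

(* Broom B(l,s) on vertex set 'I_(l+s): path 0 - 1 - ... - (l-1), and
   leaves l, ..., l+s-1 each joined to vertex 1 (a neighbour of endpoint 0). *)
Definition broom_edge (l s : nat) (i j : 'I_(l + s)) : bool :=
  [|| [&& (i < l)%N, (j < l)%N & ((val i == (val j).+1) || (val j == (val i).+1))],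
      ((l <= i)%N && (j == 1 :> nat)) |
      ((l <= j)%N && (i == 1 :> nat))].

Arguments broom_edge : clear implicits.

Definition contains_broom (l s n : nat) (G : rel 'I_n) : Prop :=
  exists f : 'I_(l + s) -> 'I_n,
    injective f /\ forall i j, broom_edge l s i j -> G (f i) (f j).

Definition broom_free (l s n : nat) (G : rel 'I_n) : Prop := ~ contains_broom l s G.

Definition common_nbhd (n : nat) (G : rel 'I_n) (X : {set 'I_n}) : {set 'I_n} :=
  [set v | [forall u in X, G u v]].

Definition extremal_broom_free (l s n : nat) (F : rel 'I_n -> nat) (G : rel 'I_n) : Prop :=
  simple_graph G /\ broom_free l s G /\
  forall G' : rel 'I_n, simple_graph G' -> broom_free l s G' -> (F G' <= F G)%N.

From mathcomp Require Import all_boot all_order all_algebra.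
From mathcomp Require Import reals zify lra.
Import Order.TTheory GRing.Theory Num.Theory.
Set Implicit Arguments. Unset Strict Implicit. Unset Printing Implicit Defensive.

(* The extremal graph beats the split graph K_k + co-K_(n-k), which is B(l,s)-free, so
   sum_v d_v^r >= k (n - r)^r.  On the other hand, a B(l,s)-free graph is (l+s)-degenerate,
   so its degree sum is O(n), and any k+1 vertices have at most k+1+s common neighbours,
   since K_(k+1,k+2+s) contains the broom.  Sort the vertices into hubs (degree nearly n),
   other heavy vertices (degree at least n/b) and light ones.  The heavy vertices are few
   and, by the second fact, carry total degree at most k n + O(1); comparing with the power
   sum forces exactly k hubs and leaves the non-hubs a negligible share of sum_v d_v^r.
   Hence almost every r-set lies in the common neighbourhood W of the hubs, and almost none
   of the r-subsets of W has a common neighbour outside the hubs. *)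

Lemma leq_card_bigcup (T I : finType) (P : pred I) (F : I -> {set T}) :
  #|\bigcup_(i | P i) F i| <= \sum_(i | P i) #|F i|.
Proof.
elim/big_rec2: _ => [|i x y _ h]; first by rewrite cards0.
by apply: leq_trans (leq_card_setU _ _) _; rewrite leq_add2l.
Qed.

Lemma leq_expn2r (e m p : nat) : m <= p -> m ^ e <= p ^ e.
Proof. by case: e => [//|e] mp; rewrite leq_exp2r. Qed.

Lemma ffact_le_expn (m r : nat) : m ^_ r <= m ^ r.
Proof.
elim: r m => [|r IH] m; first by rewrite ffactn0.
by rewrite ffactnS expnS leq_mul // (leq_trans (IH _)) // leq_expn2r // leq_pred.
Qed.

Lemma subn_expn_le_ffact (m r : nat) : (m - r) ^ r <= m.-1 ^_ r.
Proof.
elim: r m => [|r IH] [|m] //; first by rewrite sub0n exp0n.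
by rewrite subSS expnS ffactnS leq_mul ?leq_subr.
Qed.

Lemma bin_fact_le_expn (m r : nat) : 'C(m, r) * r`! <= m ^ r.
Proof. by rewrite bin_ffact ffact_le_expn. Qed.

Lemma bernoulli_subn (m x r : nat) : x <= m -> m ^ r <= (m - x) ^ r + r * x * m ^ (r - 1).
Proof.
move=> xm; elim: r => [|r IH]; first by rewrite !expn0.
rewrite subSS subn0 expnS.
have step : m * (m - x) ^ r <= (m - x) ^ r.+1 + x * m ^ r.
  rewrite -{1}(subnK xm) mulnDl expnS leq_add2l leq_mul2l leq_expn2r ?orbT //.
  exact: leq_subr.
have shift : m * (r * x * m ^ (r - 1)) <= r * x * m ^ r.
  by case: (r) => [|r']; rewrite ?mul0n ?muln0 // subn1 /= mulnCA -expnS.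
have := leq_mul (leqnn m) IH; move: shift step.
set E := m ^ r; set F := (m - x) ^ r; set H := r * x * _; nia.
Qed.

Lemma scaled_expn_le (u w p q r : nat) :
  1 < r -> p <= q -> u * p <= w * q -> u * p ^ r <= w * p * q ^ (r - 1).
Proof.
case: r => [|[|r]] // _ pq upq; rewrite subn1 /= !expnS.
have := leq_mul (leq_mul (leqnn p) upq) (leq_expn2r r pq); nia.
Qed.

(** * Embedding brooms *)

(* Position of the i-th broom vertex in [enum Y ++ enum W] with [y = #|Y|]: the odd path
   vertices come from Y, the even path vertices and then the s leaves from W. *)
Definition broom_slot (l y i : nat) : nat :=
  if i < l then (if odd i then i./2 else y + i./2) else y + uphalf l + (i - l).

Section BroomSlot.
Variables (l y : nat).
Hypothesis ly : l./2 <= y.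

Lemma broom_slot_ltY i : (broom_slot l y i < y) = (i < l) && odd i.
Proof.
rewrite /broom_slot uphalf_half; have := odd_double_half l; have := odd_double_half i.
by case: (ltnP i l); case: (odd i); case: (odd l) => /=; lia.
Qed.

Lemma broom_slot_lt s w i : uphalf l + s <= w -> i < l + s -> broom_slot l y i < y + w.
Proof.
rewrite /broom_slot uphalf_half; have := odd_double_half l; have := odd_double_half i.
by case: (ltnP i l); case: (odd i); case: (odd l) => /=; lia.
Qed.

Lemma broom_slot_inj : injective (broom_slot l y).
Proof.
move=> i j; rewrite /broom_slot uphalf_half.
have := odd_double_half l; have := odd_double_half i; have := odd_double_half j.
by case: (ltnP i l); case: (ltnP j l); case: (odd i); case: (odd j); case: (odd l) => /=; lia.
Qed.
End BroomSlot.

Section Brooms.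
Variables (n : nat) (G : rel 'I_n).
Hypotheses (Gsym : symmetric G) (Girr : irreflexive G).

Definition nbhd (v : 'I_n) : {set 'I_n} := [set u | G v u].

Lemma mem_common_nbhd (Y : {set 'I_n}) y w :
  y \in Y -> w \in common_nbhd G Y -> G y w.
Proof. by move=> yY; rewrite inE => /forall_inP; apply. Qed.

Lemma broom_of_indexing (l s : nat) (g : nat -> 'I_n) :
  {in [pred i | i < l + s] &, injective g} ->
  (forall i, i.+1 < l -> G (g i) (g i.+1)) ->
  (forall i, l <= i < l + s -> G (g 1) (g i)) ->
  contains_broom l s G.
Proof.
move=> g_inj g_path g_leaf; exists (fun i => g i); split=> [i j /g_inj eq_ij | i j].
  by apply/val_inj/eq_ij; rewrite inE.
case/or3P=> [/and3P[il jl /orP[] /eqP ij] | /andP[li /eqP ->] | /andP[lj /eqP ->]].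
- by rewrite ij Gsym g_path // -ij.
- by rewrite ij g_path // -ij.
- by rewrite Gsym g_leaf // li ltn_ord.
- by rewrite g_leaf // lj ltn_ord.
Qed.

Lemma broom_of_path (l s : nat) (x0 : 'I_n) (p q : seq 'I_n) :
  1 < l -> size p = l -> size q = s -> uniq (p ++ q) -> sorted G p ->
  all (G (nth x0 p 1)) q -> contains_broom l s G.
Proof.
move=> l_gt1 sp sq upq /(sortedP x0) p_path /allP q_leaf.
apply: (broom_of_indexing (g := nth x0 (p ++ q))) => [i j | i il | i /andP[li ils]].
- by rewrite !inE -sq -sp -size_cat => ilt jlt /eqP; rewrite nth_uniq // => /eqP.
- by rewrite !nth_cat sp il (ltnW il) p_path ?sp.
- rewrite !nth_cat sp l_gt1 ltnNge li; apply: q_leaf; apply: mem_nth.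
  by rewrite sq; lia.
Qed.

Lemma nbhd_avoid (S : {set 'I_n}) (v : 'I_n) (L : seq 'I_n) :
  size L < #|nbhd v :&: S| -> exists w, [/\ w \in S, G v w & w \notin L].
Proof.
move=> L_lt; have : ~~ (nbhd v :&: S \subset [set x in L]).
  apply: contraTN L_lt => /subset_leq_card sub; rewrite -leqNgt.
  by apply: leq_trans sub _; rewrite (eq_card (B := mem L)) ?card_size // => x; rewrite inE.
by case/subsetPn => w; rewrite !inE => /andP[vw wS] wL; exists w.
Qed.

Lemma greedy_leaves (S : {set 'I_n}) (v : 'I_n) m (L : seq 'I_n) :
  uniq L -> size L + m <= #|nbhd v :&: S| ->
  exists q, [/\ size q = m, all (G v) q & uniq (q ++ L)].
Proof.
elim: m L => [|m IH] L uL Lm; first by exists [::].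
have [w [_ vw wL]] : exists w, [/\ w \in S, G v w & w \notin L].
  by apply: nbhd_avoid; apply: leq_trans Lm; rewrite addnS ltnS leq_addr.
have uwL : uniq (w :: L) by rewrite /= wL.
have wLm : size (w :: L) + m <= #|nbhd v :&: S| by rewrite /= addSnnS.
have [q [sq vq uq]] := IH (w :: L) uwL wLm.
by exists (w :: q); split; rewrite /= ?sq ?vw //; move: uq; rewrite -cat1s uniq_catCA.
Qed.

Lemma greedy_path (S : {set 'I_n}) (t : nat) :
  {in S, forall v, t <= #|nbhd v :&: S|} ->
  forall m (L : seq 'I_n) v, v \in S -> uniq (v :: L) -> size L + m < t ->
  exists p, [/\ size p = m, path G v p & uniq (p ++ v :: L)].
Proof.
move=> S_deg; elim=> [|m IH] L v vS uL Lm; first by exists [::].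
have [|w [wS vw wL]] := nbhd_avoid (L := v :: L) (v := v) (S := S).
  by apply: leq_trans (S_deg v vS); rewrite /=; lia.
have uwL : uniq (w :: v :: L) by rewrite /= wL.
have vLm : size (v :: L) + m < t by rewrite /=; lia.
have [p [sp wp up]] := IH (v :: L) w wS uwL vLm.
by exists (w :: p); split; rewrite /= ?sp ?vw //; move: up; rewrite -cat1s uniq_catCA.
Qed.

Lemma broom_of_min_degree (l s : nat) (S : {set 'I_n}) :
  1 < l -> S != set0 -> {in S, forall v, l + s <= #|nbhd v :&: S|} ->
  contains_broom l s G.
Proof.
move=> l_gt1 /set0Pn[v1 v1S] S_deg.
have [q [sq v1q uq]] : exists q, [/\ size q = s.+1, all (G v1) q & uniq (q ++ [:: v1])].
  by apply: greedy_leaves => //; apply: leq_trans (S_deg v1 v1S); rewrite /=; lia.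
case: q sq v1q uq => [//|v0 zs] [szs] /andP[v1v0 v1zs] uq.
have [p [sp v1p up]] : exists p, [/\ size p = l - 2, path G v1 p & uniq (p ++ [:: v1, v0 & zs])].
  apply: (greedy_path S_deg) => //; last by rewrite /=; lia.
  by rewrite (uniq_catC [:: v1] (v0 :: zs)).
have perm : perm_eq (p ++ [:: v1, v0 & zs]) ([:: v0, v1 & p] ++ zs).
  by apply/permP => x; rewrite !count_cat /=; lia.
apply: (broom_of_path (x0 := v0) (p := [:: v0, v1 & p]) (q := zs)) => //.
- by rewrite /= sp; lia.
- by rewrite -(perm_uniq perm).
- by rewrite /= Gsym v1v0.
Qed.

Lemma card_nbhdI (v : 'I_n) (A : {set 'I_n}) : #|nbhd v :&: A| = \sum_(u in A) G v u.
Proof.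
rewrite -sum1_card big_mkcond [RHS]big_mkcond /=; apply: eq_bigr => u _.
by rewrite !inE; case: (u \in A); case: (G v u).
Qed.

Lemma sum_card_nbhdI_le (t : nat) :
  (forall S : {set 'I_n}, S != set0 -> exists2 v, v \in S & #|nbhd v :&: S| < t) ->
  forall S : {set 'I_n}, \sum_(u in S) #|nbhd u :&: S| <= 2 * t * #|S|.
Proof.
move=> low S; move cardS : #|S| => m; elim: m S cardS => [|m IH] S cardS.
  by move/eqP: cardS; rewrite cards_eq0 => /eqP->; rewrite big_set0.
have [v vS v_low] : exists2 v, v \in S & #|nbhd v :&: S| < t.
  by apply: low; rewrite -card_gt0 cardS.
have cardSv : #|S :\ v| = m by move: cardS; rewrite (cardsD1 v) vS => -[].
have split_u u : #|nbhd u :&: S| = G u v + #|nbhd u :&: (S :\ v)|.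
  by rewrite !card_nbhdI (big_setD1 v vS).
have to_v : \sum_(u in S :\ v) G u v <= #|nbhd v :&: S|.
  under eq_bigr => u _ do rewrite Gsym.
  by rewrite -card_nbhdI subset_leq_card // setIS // subsetDl.
rewrite (big_setD1 v vS) (eq_bigr _ (fun u _ => split_u u)) big_split /=.
move: (IH _ cardSv) to_v v_low.
set a := #|_ :&: S|; set b := \sum_(_ in _) _; set c := \sum_(_ in _) _; nia.
Qed.

Lemma broom_of_biclique (l s : nat) (Y W : {set 'I_n}) :
  {in Y & W, forall y w, G y w} -> 1 < l -> l./2 <= #|Y| -> uphalf l + s <= #|W| ->
  contains_broom l s G.
Proof.
move=> YW l_gt1 lY lW.
have [y0 _] : exists y0, y0 \in Y.
  by apply/set0Pn; rewrite -card_gt0; apply: leq_trans lY; rewrite half_gt0.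
have WnY w : w \in W -> w \notin Y by move=> wW; apply: contraFN (Girr w) => /YW; apply.
have uyw : uniq (enum Y ++ enum W).
  by rewrite cat_uniq !enum_uniq andbT /=; apply/hasPn => w; rewrite !mem_enum; exact: WnY.
pose g i := nth y0 (enum Y ++ enum W) (broom_slot l #|Y| i).
have gP i : i < l + s -> if (i < l) && odd i then g i \in Y else g i \in W.
  move=> ils; rewrite /g nth_cat -cardE.
  have := broom_slot_lt lY lW ils; have := broom_slot_ltY lY i.
  by case: (_ && _) => slotY slot_lt; rewrite slotY -mem_enum; apply: mem_nth; rewrite -?cardE; lia.
apply: (broom_of_indexing (g := g)) => [i j | i il | i /andP[li ils]].
- rewrite !inE => ils jls /eqP; rewrite nth_uniq ?size_cat -?cardE ?(broom_slot_lt lY lW) //.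
  by move=> /eqP /broom_slot_inj; apply.
- have := gP i (ltn_trans (ltnSn i) (leq_trans il (leq_addr _ _))).
  have := gP i.+1 (leq_trans il (leq_addr _ _)); rewrite il ltnW //=.
  by case: (odd i) => /= gi1 gi; [|rewrite Gsym]; apply: YW.
- have := gP 1 (leq_trans l_gt1 (leq_addr _ _)); rewrite l_gt1 /= => g1.
  by have := gP i ils; rewrite ltnNge li /=; apply: YW.
Qed.
End Brooms.

Section BroomFreeGraphs.
Variables (n : nat) (G : rel 'I_n).
Hypotheses (Gsym : symmetric G) (Girr : irreflexive G).
Variables (l s : nat).
Hypotheses (l_gt1 : 1 < l) (Gfree : broom_free l s G).

Lemma card_common_nbhd_le (k : nat) (Y : {set 'I_n}) :
  l <= 2 * k + 3 -> k < #|Y| -> #|common_nbhd G Y| <= k + 1 + s.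
Proof.
move=> lk kY; rewrite leqNgt; apply/negP => big; apply: Gfree.
have [lk1 lk2] : l./2 <= k.+1 /\ uphalf l <= k.+2.
  by rewrite uphalf_half; have := odd_double_half l; case: (odd l) => /=; lia.
apply: (broom_of_biclique Gsym Girr (Y := Y) (W := common_nbhd G Y)) => //.
- by move=> y w yY; apply: mem_common_nbhd.
- exact: leq_trans lk1 kY.
- by apply: leq_trans big; lia.
Qed.

Lemma sum_deg_le : \sum_v deg G v <= 2 * (l + s) * n.
Proof.
have := @sum_card_nbhdI_le _ _ Gsym (l + s) _ [set: 'I_n].
rewrite cardsT card_ord; under eq_bigl do rewrite inE; under eq_bigr do rewrite setIT; apply.
move=> S S0; apply/exists_inP; apply: contraT => /exists_inPn S_deg; case: Gfree.
by apply: (broom_of_min_degree Gsym (S := S)) => // v /S_deg; rewrite -leqNgt.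
Qed.
End BroomFreeGraphs.

Definition sets_with_common_nbhd (n r : nat) (G : rel 'I_n) (B : {set 'I_n}) : {set {set 'I_n}} :=
  [set X : {set 'I_n} | (#|X| == r) && (common_nbhd G X == B)].

Section Counting.
Variables (n : nat) (G : rel 'I_n).
Hypothesis Gsym : symmetric G.

Lemma deg_le (v : 'I_n) : deg G v <= n.
Proof. by rewrite -[n in _ <= n]card_ord max_card. Qed.

Lemma card_common_nbhd_ge (Y : {set 'I_n}) :
  n <= #|common_nbhd G Y| + \sum_(y in Y) (n - deg G y).
Proof.
have cover : [set: 'I_n] \subset common_nbhd G Y :|: \bigcup_(y in Y) ~: nbhd G y.
  apply/subsetP => v _; rewrite inE; case vC: (v \in common_nbhd G Y) => //=.
  move: vC; rewrite inE => /negbT; rewrite negb_forall_in => /exists_inP[y yY yv].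
  by apply/bigcupP; exists y; rewrite // !inE.
rewrite -[n in n <= _]card_ord -cardsT; apply: leq_trans (subset_leq_card cover) _.
apply: leq_trans (leq_card_setU _ _) _; rewrite leq_add2l.
apply: leq_trans (leq_card_bigcup _ _) _; apply: leq_sum => y _.
by rewrite -(leq_add2l (deg G y)) subnKC ?deg_le // cardsC card_ord.
Qed.
Lemma binom_common_nbhd_le (r : nat) (B : {set 'I_n}) :
  'C(#|common_nbhd G B|, r) <= #|sets_with_common_nbhd r G B| + \sum_(v in ~: B) 'C(deg G v, r).
Proof.
rewrite -cards_draws.
set good := sets_with_common_nbhd r G B.
have cover : [set X : {set 'I_n} | X \subset common_nbhd G B & #|X| == r] \subset
    good :|: \bigcup_(v in ~: B) [set X : {set 'I_n} | X \subset nbhd G v & #|X| == r].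
  apply/subsetP => X; rewrite inE in_setU => /andP[XW Xr].
  have [//|badX] := boolP (X \in good); apply/orP; right.
  have BX : B \subset common_nbhd G X.
    apply/subsetP => v vB; rewrite inE; apply/forall_inP => u /(subsetP XW) uW.
    by rewrite Gsym (mem_common_nbhd vB uW).
  have : ~~ (common_nbhd G X \subset B).
    by apply: contra badX => XB; rewrite inE Xr eqEsubset XB BX.
  case/subsetPn => v vX vB; apply/bigcupP; exists v; rewrite ?inE //.
  rewrite Xr andbT; apply/subsetP => u uX; rewrite inE Gsym; exact: mem_common_nbhd vX.
apply: leq_trans (subset_leq_card cover) _; apply: leq_trans (leq_card_setU _ _) _.
rewrite leq_add2l; apply: leq_trans (leq_card_bigcup _ _) _.
by apply: leq_sum => v _; rewrite cards_draws.
Qed.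

End Counting.

(** * The split graph and the lower bound *)

Lemma card_ord_ltn_le (n k : nat) : #|[set u : 'I_n | u < k]| <= k.
Proof.
rewrite cardE -(size_map val) -[k in _ <= k](size_iota 0); apply: uniq_leq_size.
  by rewrite (map_inj_uniq val_inj) enum_uniq.
by move=> i /mapP[u]; rewrite mem_enum inE => uk ->; rewrite mem_iota.
Qed.

Definition split_graph (n k : nat) : rel 'I_n := fun u v => (u != v) && ((u < k) || (v < k)).
Arguments split_graph : clear implicits.

Lemma split_graph_simple (n k : nat) : simple_graph (split_graph n k).
Proof. by split=> [u v | u]; rewrite /split_graph ?eqxx // eq_sym orbC. Qed.

Lemma split_graph_broom_free (n k l s : nat) :
  2 * k + 2 <= l -> broom_free l s (split_graph n k).
Proof.
move=> kl [f [f_inj f_edge]].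
have lt_even (j : 'I_k.+1) : 2 * j < l + s by have := ltn_ord j; lia.
have lt_odd (j : 'I_k.+1) : 2 * j + 1 < l + s by have := ltn_ord j; lia.
pose x j := f (Ordinal (lt_even j)); pose y j := f (Ordinal (lt_odd j)).
have xy j : split_graph n k (x j) (y j).
  apply: f_edge; rewrite /broom_edge /= addn1 eqxx orbT andbT; have := ltn_ord j; lia.
(* The path edges {2j, 2j+1}, j <= k, are disjoint and each has an endpoint below k. *)
pose g j := if x j < k then x j else y j.
have g_lt j : g j \in [set u : 'I_n | u < k].
  by rewrite inE /g; case: ifP => // xk; move: (xy j); rewrite /split_graph xk => /andP[].
have g_inj : injective g.
  move=> i j; rewrite /g; case: ifP => _; case: ifP => _ /f_inj /(congr1 val) /= eq_ij;
    by apply: ord_inj; lia.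
have sub : g @: [set: 'I_k.+1] \subset [set u : 'I_n | u < k].
  by apply/subsetP => _ /imsetP[j _ ->].
have := leq_trans (subset_leq_card sub) (card_ord_ltn_le n k).
by rewrite card_imset // cardsT card_ord ltnn.
Qed.

Lemma deg_split_graph (n k : nat) (u : 'I_n) : u < k -> deg (split_graph n k) u = n.-1.
Proof.
move=> uk; rewrite /deg (_ : [set v | _] = [set~ u]) ?cardsC1 ?card_ord //.
by apply/setP => v; rewrite !inE /split_graph uk andbT eq_sym.
Qed.

Lemma sum_split_graph_ge (n k : nat) (F : nat -> nat) :
  k <= n -> k * F n.-1 <= \sum_v F (deg (split_graph n k) v).
Proof.
move=> kn; rewrite (bigID (fun v : 'I_n => v < k)) /= (leq_trans _ (leq_addr _ _)) //.
rewrite (eq_bigr (fun _ => F n.-1)) => [|v vk]; last by rewrite deg_split_graph.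
by rewrite -(big_ord_widen n (fun _ => F n.-1) kn) sum_nat_const card_ord.
Qed.

Lemma extremal_sum_expn_deg_ge (l s r k n : nat) (G : rel 'I_n) :
  2 * k + 2 <= l -> k <= n ->
  extremal_broom_free l s (@e_r r n) G \/ extremal_broom_free l s (@N_star r n) G ->
  k * (n - r) ^ r <= \sum_v deg G v ^ r.
Proof.
move=> kl kn Gext.
have split_ext F : (forall G' : rel 'I_n, simple_graph G' -> broom_free l s G' ->
      \sum_v F (deg G' v) <= \sum_v F (deg G v)) -> k * F n.-1 <= \sum_v F (deg G v).
  move=> /(_ _ (split_graph_simple n k) (@split_graph_broom_free n k l s kl)).
  exact: leq_trans (sum_split_graph_ge F kn).
case: Gext => [[_ [_ Gmax]] | [_ [_ Gmax]]].
  apply: (@leq_trans (k * n.-1 ^ r)); last exact: split_ext (fun d => d ^ r) Gmax.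
  by rewrite leq_mul2l (leq_trans (subn_expn_le_ffact n r)) ?ffact_le_expn ?orbT.
apply: (@leq_trans (k * n.-1 ^_ r)); first by rewrite leq_mul2l subn_expn_le_ffact orbT.
have := leq_mul (split_ext (fun d => 'C(d, r)) Gmax) (leqnn r`!).
rewrite -mulnA bin_ffact => /leq_trans; apply.
by rewrite big_distrl leq_sum // => v _; apply: bin_fact_le_expn.
Qed.

(** * Concentration of the degree mass *)

(* The arithmetic of [card_hubs_eq], [medium_mass_le] and [card_sets_with_common_nbhd_hubs_ge];
   A, M and L stand for the degree masses of the hubs, the other heavy vertices and the light
   vertices. *)
Lemma mass_deficit_bound (a b k n A M L c D r : nat) :
  a * b * k * n <= a * b * A + b * (a - 1) * M + a * L + a * b * k * r ^ 2 ->
  A <= (k - 1) * n -> A + M <= k * n + c -> L <= D * n -> 2 * a * D <= b ->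
  0 < a -> 0 < k -> 0 < b -> n <= 2 * a * (c + k * r ^ 2).
Proof.
case: a => [//|a]; case: k => [//|k]; rewrite !subn1 /= => mass hA hAM hL hb _ _ b_gt0.
have := leq_mul (leqnn (b * a)) hAM; have := leq_mul (leqnn b) hA.
have := leq_mul (leqnn a.+1) hL; have := leq_mul (leqnn n) hb => *.
rewrite -(leq_pmul2l b_gt0); nia.
Qed.

Lemma medium_mass_arith (a b k n A M L c D r : nat) :
  a * b * k * n <= a * b * A + b * (a - 1) * M + a * L + a * b * k * r ^ 2 ->
  A + M <= k * n + c -> L <= D * n -> 0 < a ->
  b * M <= a * b * c + a * D * n + a * b * k * r ^ 2.
Proof.
case: a => [//|a]; rewrite subn1 /= => mass hAM hL _.
have := leq_mul (leqnn (a.+1 * b)) hAM; have := leq_mul (leqnn a.+1) hL; nia.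
Qed.

Lemma error_terms_small (a b k n M L c D r m x : nat) :
  b * M <= a * b * c + a * D * n + a * b * k * r ^ 2 -> L <= D * n -> a * x <= k * n + a * r ->
  3 * m * r * k <= a -> 3 * m * (a + 1) * D <= b -> 3 * m * (a * c + a * k * r ^ 2 + r ^ 2) <= n ->
  m * (a * b * M + a * L + a * b * r * x) <= a * b * n.
Proof.
move=> hM hL hx ha hb hn.
have := leq_mul (leqnn (m * a)) hM; have := leq_mul (leqnn (m * a)) hL.
have := leq_mul (leqnn (m * b * r)) hx; have := leq_mul (leqnn (a * b)) hn.
have := leq_mul (leqnn (a * n)) hb; have := leq_mul (leqnn (b * n)) ha; nia.
Qed.

Lemma good_count_arith (a b m n r P N x good f SM SL M L C : nat) :
  0 < a -> 0 < b -> 0 < f ->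
  n * P <= N + r * x * P -> N <= good * f + SM + SL -> SM <= M * P -> b * SL <= L * P ->
  m.+1 * (a * b * M + a * L + a * b * r * x) <= a * b * n -> C * f <= n * P ->
  m * C <= m.+1 * good.
Proof.
move=> a0 b0 f0 hB hN hM hL hF hC.
have := leq_mul (leqnn (m.+1 * a * b)) hB; have := leq_mul (leqnn (m.+1 * a * b)) hN.
have := leq_mul (leqnn (m.+1 * a * b)) hM; have := leq_mul (leqnn (m.+1 * a)) hL.
have := leq_mul hF (leqnn P); have := leq_mul (leqnn (m * a * b)) hC => *.
have : m * C * (a * b * f) <= m.+1 * good * (a * b * f) by nia.
by rewrite leq_pmul2r // !muln_gt0 a0 b0 f0.
Qed.

Section Concentration.
Variables (n : nat) (G : rel 'I_n) (l s k : nat).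
Hypotheses (Gsym : symmetric G) (Girr : irreflexive G) (Gfree : broom_free l s G).
Hypotheses (kl : 2 * k + 2 <= l) (lk : l <= 2 * k + 3).

Local Notation d := (deg G).
Local Notation D := (2 * (l + s)).

Let l_gt1 : 1 < l. Proof. lia. Qed.

Definition hubs (a : nat) : {set 'I_n} := [set v | (a - 1) * n <= a * d v].
Definition heavy (b : nat) : {set 'I_n} := [set v | n <= b * d v].

Lemma card_common_nbhd_hubs_ge (a : nat) (Y : {set 'I_n}) :
  Y \subset hubs a -> a * n <= a * #|common_nbhd G Y| + #|Y| * n.
Proof.
move=> Yhubs; rewrite -sum_nat_const.
apply: leq_trans (leq_mul (leqnn a) (card_common_nbhd_ge G Y)) _.
rewrite mulnDr leq_add2l big_distrr /=; apply: leq_sum => y /(subsetP Yhubs).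
by rewrite inE mulnBl mul1n mulnBr; lia.
Qed.

Lemma card_hubs_le (a : nat) : 2 * k + 2 <= a -> 2 * (k + 2 + s) <= n -> #|hubs a| <= k.
Proof.
move=> ka kn; rewrite leqNgt; apply/negP => many.
have [Y Yhubs cardY] : exists2 Y : {set 'I_n}, Y \subset hubs a & #|Y| = k.+1.
  have : 0 < 'C(#|hubs a|, k.+1) by rewrite bin_gt0.
  by rewrite -cards_draws card_gt0 => /set0Pn[Y]; rewrite inE => /andP[? /eqP]; exists Y.
have few_common : #|common_nbhd G Y| <= k + 1 + s.
  by apply: (card_common_nbhd_le Gsym Girr l_gt1 Gfree lk); rewrite cardY.
move: (card_common_nbhd_hubs_ge Yhubs) few_common; rewrite cardY; set C := #|_|; nia.
Qed.

Lemma card_heavy_le (b : nat) : 0 < n -> #|heavy b| <= b * D.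
Proof.
move=> n_gt0; rewrite -(leq_pmul2r n_gt0) -sum_nat_const.
apply: leq_trans (_ : \sum_(v in heavy b) b * d v <= _); first by apply: leq_sum => v; rewrite inE.
rewrite -big_distrr -mulnA leq_mul2l (leq_trans _ (sum_deg_le Gsym l_gt1 Gfree)) ?orbT //.
by rewrite [X in _ <= X](bigID (mem (heavy b))) leq_addr.
Qed.

Lemma hubs_sub_heavy (a b : nat) : 1 < a -> 1 < b -> hubs a \subset heavy b.
Proof. by move=> a_gt1 b_gt1; apply/subsetP => v; rewrite !inE; nia. Qed.

(* A vertex with more than k neighbours in H is a common neighbour of a (k+1)-subset of H. *)
Lemma sum_deg_in_le (H : {set 'I_n}) :
  \sum_(v in H) d v <= k * n + #|H| * 2 ^ #|H| * (k + 1 + s).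
Proof.
pose U := \bigcup_(Y in powerset H | k < #|Y|) common_nbhd G Y.
have cardU : #|U| <= 2 ^ #|H| * (k + 1 + s).
  apply: leq_trans (leq_card_bigcup _ _) _.
  apply: leq_trans (_ : \sum_(Y in powerset H) (k + 1 + s) <= _); last first.
    by rewrite sum_nat_const card_powerset.
  rewrite big_mkcondr /=; apply: leq_sum => Y _; case: ifP => // kY.
  exact: (card_common_nbhd_le Gsym Girr l_gt1 Gfree lk).
have nbhd_in_H w : #|nbhd G w :&: H| <= k + (w \in U) * #|H|.
  case: (leqP #|nbhd G w :&: H| k) => [small | kw]; first exact: leq_trans small (leq_addr _ _).
  have -> : w \in U.
    apply/bigcupP; exists (nbhd G w :&: H); first by rewrite inE subsetIr kw.
    by rewrite inE; apply/forall_inP => u; rewrite !inE Gsym => /andP[].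
  by rewrite mul1n (leq_trans _ (leq_addl _ _)) // subset_leq_card // subsetIr.
have -> : \sum_(v in H) d v = \sum_w #|nbhd G w :&: H|.
  rewrite (eq_bigr (fun v => \sum_w (G v w : nat))) => [|v _]; last first.
    by rewrite /deg -sum1_card big_mkcond; apply: eq_bigr => w _; rewrite inE; case: (G v w).
  rewrite exchange_big; apply: eq_bigr => w _; rewrite card_nbhdI.
  by apply: eq_bigr => v _; rewrite Gsym.
apply: (@leq_trans (\sum_w (k + (w \in U) * #|H|))); first exact: leq_sum.
rewrite big_split sum_nat_const card_ord mulnC leq_add2l -big_distrl /= mulnC -mulnA leq_mul2l.
rewrite (leq_trans _ cardU) ?orbT // -sum1_card [X in _ <= X]big_mkcond /=.
by apply: leq_sum => w _; case: (w \in U).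
Qed.

Variables (r a b : nat).
Hypotheses (r_gt1 : 1 < r) (rn : r <= n) (a_gt1 : 1 < a) (b_gt1 : 1 < b).

Let n_gt0 : 0 < n. Proof. lia. Qed.
Let P := n ^ (r - 1).
Let A := \sum_(v in hubs a) d v.
Let M := \sum_(v in heavy b :\: hubs a) d v.
Let L := \sum_(v in ~: heavy b) d v.
Let c := b * D * 2 ^ (b * D) * (k + 1 + s).

Let sum_heavy (F : 'I_n -> nat) :
  \sum_(v in heavy b) F v = \sum_(v in hubs a) F v + \sum_(v in heavy b :\: hubs a) F v.
Proof. by rewrite (big_setID (hubs a)) (setIidPr (hubs_sub_heavy a_gt1 b_gt1)). Qed.

Let sum_all (F : 'I_n -> nat) :
  \sum_v F v = \sum_(v in heavy b) F v + \sum_(v in ~: heavy b) F v.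
Proof. by rewrite (bigID (mem (heavy b))); congr (_ + _); apply: eq_bigl => v; rewrite !inE. Qed.

Let sum_not_hubs (F : 'I_n -> nat) :
  \sum_(v in ~: hubs a) F v = \sum_(v in heavy b :\: hubs a) F v + \sum_(v in ~: heavy b) F v.
Proof.
rewrite (big_setID (heavy b)); congr (_ + _); apply: eq_bigl => v.
  by rewrite in_setI in_setD in_setC.
rewrite in_setD !in_setC; apply: andb_idr; apply: contra.
exact: (subsetP (hubs_sub_heavy a_gt1 b_gt1)).
Qed.

Let sum_expn_le (S : {set 'I_n}) (u w : nat) : {in S, forall v, u * d v <= w * n} ->
  u * \sum_(v in S) d v ^ r <= w * (\sum_(v in S) d v) * P.
Proof.
move=> S_deg; rewrite big_distrr big_distrr big_distrl /=; apply: leq_sum => v vS.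
exact: scaled_expn_le r_gt1 (deg_le G v) (S_deg v vS).
Qed.

Let expn_hubs_le : \sum_(v in hubs a) d v ^ r <= A * P.
Proof.
by have := @sum_expn_le (hubs a) 1 1; rewrite !mul1n; apply=> v _; rewrite !mul1n deg_le.
Qed.

Let expn_medium_le : \sum_(v in heavy b :\: hubs a) d v ^ r <= M * P.
Proof.
have := @sum_expn_le (heavy b :\: hubs a) 1 1.
by rewrite !mul1n; apply=> v _; rewrite !mul1n deg_le.
Qed.

Let expn_medium_le_scaled : a * \sum_(v in heavy b :\: hubs a) d v ^ r <= (a - 1) * M * P.
Proof. by apply: sum_expn_le => v; rewrite in_setD inE -ltnNge => /andP[/ltnW]. Qed.

Let expn_light_le : b * \sum_(v in ~: heavy b) d v ^ r <= L * P.
Proof.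
have := @sum_expn_le (~: heavy b) b 1; rewrite !mul1n; apply=> v.
by rewrite in_setC inE -ltnNge => /ltnW.
Qed.

(* d^r <= d n^(r-1), improved by the factor (a-1)/a off the hubs and 1/b off the heavy vertices. *)
Lemma sum_expn_deg_le : a * b * \sum_v d v ^ r <= (a * b * A + b * (a - 1) * M + a * L) * P.
Proof.
have := leq_mul (leqnn (a * b)) expn_hubs_le; have := leq_mul (leqnn b) expn_medium_le_scaled.
have := leq_mul (leqnn a) expn_light_le; rewrite sum_all sum_heavy.
set x := \sum_(_ in hubs a) _; set y := \sum_(_ in _ :\: _) _; set z := \sum_(_ in ~: _) _.
nia.
Qed.

Let n_expn : n ^ r = n * P.
Proof. by rewrite /P -expnS subn1 prednK // ltnW. Qed.

Hypothesis deg_power_mass : k * (n - r) ^ r <= \sum_v d v ^ r.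

Lemma hub_mass_ge : a * b * k * n <= a * b * A + b * (a - 1) * M + a * L + a * b * k * r ^ 2.
Proof.
have P_gt0 : 0 < P by rewrite expn_gt0 n_gt0.
have bern : n * P <= (n - r) ^ r + r * r * P by rewrite -n_expn bernoulli_subn.
rewrite -(leq_pmul2r P_gt0); have := sum_expn_deg_le.
have := leq_mul (leqnn (a * b * k)) bern; have := leq_mul (leqnn (a * b)) deg_power_mass.
set S := \sum_v _; set E := (n - r) ^ r; nia.
Qed.

Lemma heavy_mass_le : A + M <= k * n + c.
Proof.
rewrite -sum_heavy (leq_trans (sum_deg_in_le _)) // leq_add2l leq_mul2r.
by rewrite leq_mul ?leq_pexp2l ?card_heavy_le ?orbT.
Qed.

Lemma light_mass_le : L <= D * n.
Proof.
apply: leq_trans (leq_addl (\sum_(v in heavy b) d v) _) _.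
by rewrite -sum_all; apply: sum_deg_le.
Qed.

Lemma card_hubs_eq : 2 * k + 2 <= a -> 2 * (k + 2 + s) <= n -> 2 * a * D <= b ->
  2 * a * (c + k * r ^ 2) < n -> #|hubs a| = k.
Proof.
move=> ka kn bD nlarge; apply/eqP; rewrite eqn_leq card_hubs_le //= leqNgt; apply/negP => few.
have k_gt0 : 0 < k := leq_ltn_trans (leq0n _) few.
have hubs_mass : A <= (k - 1) * n.
  apply: leq_trans (_ : \sum_(v in hubs a) n <= _); first by apply: leq_sum => v _; apply: deg_le.
  by rewrite sum_nat_const leq_mul2r subn1 -ltnS prednK // few orbT.
have := mass_deficit_bound hub_mass_ge hubs_mass heavy_mass_le light_mass_le bD.
by move=> /(_ (ltnW a_gt1) k_gt0 (ltnW b_gt1)); rewrite leqNgt nlarge.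
Qed.

Lemma medium_mass_le : b * M <= a * b * c + a * D * n + a * b * k * r ^ 2.
Proof. exact: medium_mass_arith hub_mass_ge heavy_mass_le light_mass_le (ltnW a_gt1). Qed.

Lemma card_sets_with_common_nbhd_hubs_ge (m : nat) :
  2 * k + 2 <= a -> 2 * (k + 2 + s) <= n -> 2 * a * D <= b -> 2 * a * (c + k * r ^ 2) < n ->
  3 * m.+1 * r * k <= a -> 3 * m.+1 * (a + 1) * D <= b ->
  3 * m.+1 * (a * c + a * k * r ^ 2 + r ^ 2) <= n ->
  m * 'C(n, r) <= m.+1 * #|sets_with_common_nbhd r G (hubs a)|.
Proof.
move=> ka kn bD nlarge ma mb mn.
have hubs_k := card_hubs_eq ka kn bD nlarge.
set W := common_nbhd G (hubs a).
have W_large : a * n <= a * #|W| + k * n.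
  by have := card_common_nbhd_hubs_ge (subxx (hubs a)); rewrite hubs_k.
set x := n - (#|W| - r).
have x_le : a * x <= k * n + a * r.
  apply: leq_trans (leq_mul (leqnn a) (_ : x <= n - #|W| + r)) _; first by rewrite /x; lia.
  by rewrite mulnDr mulnBr leq_add2r leq_subLR.
have W_le : #|W| - r <= n by rewrite (leq_trans (leq_subr _ _)) // -[n in _ <= n]card_ord max_card.
have bern : n * P <= (#|W| - r) ^ r + r * x * P.
  by rewrite -n_expn; have := bernoulli_subn r (leq_subr (#|W| - r) n); rewrite subKn.
have W_sets : (#|W| - r) ^ r <= #|sets_with_common_nbhd r G (hubs a)| * r`! +
    \sum_(v in heavy b :\: hubs a) d v ^ r + \sum_(v in ~: heavy b) d v ^ r.
  apply: (@leq_trans ('C(#|W|, r) * r`!)).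
    rewrite bin_ffact (leq_trans _ (subn_expn_le_ffact #|W|.+1 r)) //.
    by rewrite leq_expn2r // leq_sub2r.
  rewrite -addnA -sum_not_hubs.
  apply: leq_trans (leq_mul (binom_common_nbhd_le Gsym r (hubs a)) (leqnn r`!)) _.
  by rewrite mulnDl leq_add2l big_distrl leq_sum // => v _; apply: bin_fact_le_expn.
have binom_n : 'C(n, r) * r`! <= n * P by rewrite -n_expn bin_fact_le_expn.
apply: (good_count_arith (ltnW a_gt1) (ltnW b_gt1) (fact_gt0 r) bern W_sets
  expn_medium_le expn_light_le _ binom_n).
exact: error_terms_small medium_mass_le light_mass_le x_le ma mb mn.
Qed.
End Concentration.

Lemma extremal_common_nbhd_concentration (l s r m : nat) :
  1 < l -> 1 < r ->
  exists n0, forall n, n0 <= n -> forall G : rel 'I_n,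
    extremal_broom_free l s (@e_r r n) G \/ extremal_broom_free l s (@N_star r n) G ->
    exists B : {set 'I_n},
      #|B| = (l - 2)./2 /\ m * 'C(n, r) <= m.+1 * #|sets_with_common_nbhd r G B|.
Proof.
move=> l_gt1 r_gt1; set k := (l - 2)./2.
have [kl lk] : 2 * k + 2 <= l /\ l <= 2 * k + 3.
  by rewrite /k; have := odd_double_half (l - 2); case: odd => /=; lia.
set D := 2 * (l + s).
(* a and b make the error terms cost at most a 1/(m+1) fraction of the r-sets; c bounds the
   excess degree mass of the heavy vertices. *)
set a := 3 * m.+1 * r * k + 2 * k + 2.
set b := 3 * m.+1 * (a + 1) * D + 2 * a * D + 2.
set c := b * D * 2 ^ (b * D) * (k + 1 + s).
exists (3 * m.+1 * (a * c + a * k * r ^ 2 + r ^ 2) + 2 * a * (c + k * r ^ 2) + 2 * (k + 2 + s) + r).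
move=> n n_large G Gext.
have [[Gsym Girr] Gfree] : simple_graph G /\ broom_free l s G by case: Gext => -[? []].
have kn : k <= n by lia.
have power_mass := extremal_sum_expn_deg_ge kl kn Gext.
have rn : r <= n by move: n_large; lia.
have ka : 2 * k + 2 <= a by rewrite /a; lia.
have ma : 3 * m.+1 * r * k <= a by rewrite /a; lia.
have bD : 2 * a * D <= b by rewrite /b; lia.
have mb : 3 * m.+1 * (a + 1) * D <= b by rewrite /b; lia.
have b_gt1 : 1 < b by rewrite /b; lia.
have nk : 2 * (k + 2 + s) <= n by move: n_large; lia.
have nlarge : 2 * a * (c + k * r ^ 2) < n by move: n_large; lia.
have mn : 3 * m.+1 * (a * c + a * k * r ^ 2 + r ^ 2) <= n by move: n_large; lia.
have a_gt1 : 1 < a by apply: leq_trans ka; rewrite addn2.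
exists (hubs G a); split.
  exact: (card_hubs_eq Gsym Girr Gfree kl lk r_gt1 rn a_gt1 b_gt1 power_mass).
exact: (card_sets_with_common_nbhd_hubs_ge Gsym Girr Gfree kl lk r_gt1 rn a_gt1 b_gt1 power_mass).
Qed.

Lemma ler_one_sub_mul_natr (R : realType) (gamma : R) (m C g : nat) :
  (0 < gamma)%R -> (gamma^-1 < m.+1%:R)%R -> m * C <= m.+1 * g ->
  ((1 - gamma) * C%:R <= g%:R)%R.
Proof.
move=> gamma_gt0 m_large mCg.
have m1_gt0 : (0 < m.+1%:R :> R)%R by rewrite ltr0n.
have gamma_m : (1 < gamma * m.+1%:R)%R.
  have : (gamma * gamma^-1 < gamma * m.+1%:R)%R by rewrite ltr_pM2l.
  by rewrite mulfV ?gt_eqF.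
have mCg_R : (m%:R * C%:R <= m.+1%:R * g%:R :> R)%R by rewrite -!natrM ler_nat.
have slack : (0 <= (gamma * m.+1%:R - 1) * C%:R :> R)%R by rewrite mulr_ge0 ?ler0n // subr_ge0 ltW.
rewrite -(ler_pM2l m1_gt0); move: mCg_R slack; rewrite -natr1; nra.
Qed.

Theorem mainTheorem5 (R : realType) (l s r : nat) :
  (4 <= l)%N -> (2 <= r)%N ->
  forall gamma : R, (0 < gamma)%R ->
  exists n0 : nat, forall n : nat, (n0 <= n)%N ->
  forall G : rel 'I_n,
    (extremal_broom_free l s (@e_r r n) G \/ extremal_broom_free l s (@N_star r n) G) ->
    exists B : {set 'I_n},
      #|B| = ((l - 2)./2)%N /\
      ((1 - gamma) * ('C(n, r))%:R <=
        (#|[set X : {set 'I_n} | (#|X| == r) && (common_nbhd G X == B)]|)%:R)%R.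
Proof.
move=> l4 r_gt1 gamma gamma_gt0.
have l_gt1 : 1 < l by apply: leq_trans l4.
have [n0 concentrated] := extremal_common_nbhd_concentration s (Num.truncn gamma^-1) l_gt1 r_gt1.
exists n0 => n n_large G Gext.
have [B [cardB most]] := concentrated n n_large G Gext.
exists B; split => //; apply: ler_one_sub_mul_natr most => //.
exact: truncnS_gt.
Qed.
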